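(* Let $W,V$ be subspaces of $\mathbb{C}^n$ with $\mathbb{C}^n=W\oplus V^\perp$, let $\{\mathbf{w}_i\}_{i=1}^N$ be a frame for $W$ with frame operator $\mathbf{S}=\sum_{i=1}^N\mathbf{w}_i\mathbf{w}_i^*$, and let $\{\mathbf{v}_i\}_{i=1}^N$ be an oblique dual frame of $\{\mathbf{w}_i\}_{i=1}^N$ on $V$. Then $$\sum_{i=1}^N\sum_{j=1}^N|\langle\mathbf{w}_i,\mathbf{v}_j\rangle|^2\ge d_W,$$ where $d_W=\dim W$, and equality holds if and only if $\mathbf{v}_j=\boldsymbol{\pi}_{VW^\perp}\mathbf{S}^\dagger\mathbf{w}_j$ for every $j=1,\dots,N$.
   Context: The inner product on $\mathbb{C}^n$ is $\langle\mathbf{x},\mathbf{y}\rangle=\mathbf{y}^*\mathbf{x}$. $\mathbf{S}^\dagger$ is the Moore–Penrose inverse. When $\mathbb{C}^n=W\oplus V^\perp$ (equivalently $\mathbb{C}^n=V\oplus W^\perp$), $\boldsymbol{\pi}_{WV^\perp}$ is the oblique projection onto $W$ along $V^\perp$ and $\boldsymbol{\pi}_{VW^\perp}$ is the oblique projection onto $V$ along $W^\perp$. A finite family $\{\mathbf{w}_i\}_{i=1}^N\subset W$ is a frame for $W$ if it spans $W$. A frame $\{\mathbf{v}_i\}_{i=1}^N\subset V$ for $V$ is an oblique dual frame of $\{\mathbf{w}_i\}$ on $V$ if $\boldsymbol{\pi}_{WV^\perp}\mathbf{f}=\sum_{i=1}^N\langle\mathbf{f},\mathbf{v}_i\rangle\mathbf{w}_i$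 for all $\mathbf{f}\in\mathbb{C}^n$. *)

From mathcomp Require Import all_boot all_order all_algebra.
Set Implicit Arguments. Unset Strict Implicit. Unset Printing Implicit Defensive.
Import Order.TTheory GRing.Theory Num.Theory.
Local Open Scope ring_scope.

(* Vectors of C^n are column vectors 'cV[C]_n; C is any numeric algebraically
   closed field with conjugation (e.g. the complex numbers). *)

Definition hadj (C : numClosedFieldType) m p (A : 'M[C]_(m, p)) : 'M[C]_(p, m) :=
  (map_mx Num.conj A)^T.

Definition cdot (C : numClosedFieldType) n (x y : 'cV[C]_n) : C :=
  (hadj y *m x) 0 0.

(* Subspaces of C^n are represented (mxalgebra style) by the row space of a
   square matrix U : 'M_n; the column vector x lies in U iff (x^T <= U)%MS. *)
Definition inS (C : numClosedFieldType) n (x : 'cV[C]_n) (U : 'M[C]_n) : bool :=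
  (x^T <= U)%MS.

(* orthogonal complement U^perp : row vectors r with r *m (conj U)^T = 0,
   i.e. column x = r^T with <x, u> = 0 for every u in U *)
Definition perp (C : numClosedFieldType) n (U : 'M[C]_n) : 'M[C]_n :=
  kermx (hadj U).

Definition direct_compl (C : numClosedFieldType) n (W V : 'M[C]_n) : Prop :=
  mxdirect (W + perp V) /\ row_full (W + perp V).

(* oblique projection pi_{W V^perp} onto W along V^perp, acting on column
   vectors (transpose of mathcomp's row-vector projection proj_mx) *)
Definition oproj (C : numClosedFieldType) n (W V : 'M[C]_n) : 'M[C]_n :=
  (proj_mx W (perp V))^T.

Definition fam_mx (C : numClosedFieldType) n N (w : 'I_N -> 'cV[C]_n) : 'M[C]_(N, n) :=
  \matrix_(i < N, k < n) w i k 0.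

Definition frame_for (C : numClosedFieldType) n N (w : 'I_N -> 'cV[C]_n)
  (U : 'M[C]_n) : Prop := (fam_mx w == U)%MS.

Definition frame_op (C : numClosedFieldType) n N (w : 'I_N -> 'cV[C]_n) : 'M[C]_n :=
  \sum_(i < N) (w i *m hadj (w i)).

Definition oblique_dual (C : numClosedFieldType) n N (W V : 'M[C]_n)
  (w v : 'I_N -> 'cV[C]_n) : Prop :=
  frame_for v V /\
  forall f : 'cV[C]_n, oproj W V *m f = \sum_(i < N) cdot f (v i) *: w i.

Definition is_MP_inverse (C : numClosedFieldType) n (A X : 'M[C]_n) : Prop :=
  [/\ A *m X *m A = A, X *m A *m X = X,
      hadj (A *m X) = A *m X & hadj (X *m A) = X *m A].

From mathcomp Require Import all_boot all_order all_algebra.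
From mathcomp Require Import zify ring.
Import Order.TTheory GRing.Theory Num.Theory.
Local Open Scope ring_scope.

Set Implicit Arguments.
Unset Strict Implicit.

(* Let T and B be the synthesis operators of {w_i} and {v_j}.  Duality says that
   P = T B^* is the projection onto W along V^perp, so the Gram matrix G = B^* T,
   whose entries are the <w_i, v_j>, is idempotent with trace tr P = dim W.  For an
   idempotent G, ||G - G^*||_F^2 = 2 (||G||_F^2 - tr G), which gives the bound, with
   equality iff G is Hermitian.  As P^* is the projection onto V along W^perp, G is
   Hermitian iff B = P^* S^+ T. *)

Section Adjoint.
Variable C : numClosedFieldType.

Lemma hadjE m p (A : 'M[C]_(m, p)) i j : hadj A i j = (A j i)^*.
Proof. by rewrite !mxE. Qed.

Lemma hadjK m p (A : 'M[C]_(m, p)) : hadj (hadj A) = A.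
Proof. by apply/matrixP => i j; rewrite !hadjE conjCK. Qed.

Lemma hadj0 m p : hadj (0 : 'M[C]_(m, p)) = 0.
Proof. by rewrite /hadj map_mx0 trmx0. Qed.

Lemma hadjM m p q (A : 'M[C]_(m, p)) (B : 'M[C]_(p, q)) :
  hadj (A *m B) = hadj B *m hadj A.
Proof. by rewrite /hadj map_mxM trmx_mul. Qed.

Lemma hadjB m p (A B : 'M[C]_(m, p)) : hadj (A - B) = hadj A - hadj B.
Proof. by rewrite /hadj map_mxB linearB. Qed.

Lemma hadj1 m : hadj (1%:M : 'M[C]_m) = 1%:M.
Proof. by rewrite /hadj map_mx1 trmx1. Qed.

Lemma rank_hadj m p (A : 'M[C]_(m, p)) : \rank (hadj A) = \rank A.
Proof. by rewrite mxrank_tr mxrank_map. Qed.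

Lemma mul_hadj_eq0 m p (M : 'M[C]_(m, p)) : M *m hadj M = 0 -> M = 0.
Proof.
move=> MM0; apply/matrixP => i k; rewrite mxE; apply/eqP.
have /psumr_eq0P normM0 : \sum_j M i j * (M i j)^* = 0.
  by move/matrixP: MM0 => /(_ i i); rewrite !mxE; under eq_bigr do rewrite hadjE.
by rewrite -mul_conjC_eq0 normM0 // => j _; rewrite mul_conjC_ge0.
Qed.

End Adjoint.

Section MoorePenrose.
Variables (C : numClosedFieldType) (n : nat).
Implicit Types A X Y : 'M[C]_n.

Lemma MP_inverse_hadj A X : is_MP_inverse A X -> is_MP_inverse (hadj A) (hadj X).
Proof.
case=> AXA XAX hAX hXA; split; rewrite -?hadjM ?mulmxA ?AXA ?XAX //.
- by rewrite hXA.
- by rewrite hAX.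
Qed.

Lemma MP_inverse_unique A X Y : is_MP_inverse A X -> is_MP_inverse A Y -> X = Y.
Proof.
case=> AXA XAX hAX hXA [AYA YAY hAY hYA].
have hA_AY : hadj A = hadj A *m (A *m Y) by rewrite -[in LHS]AYA hadjM hAY.
have hA_XA : hadj A = X *m A *m hadj A.
  by rewrite -[in LHS]AXA -mulmxA hadjM hXA.
have -> : X = X *m A *m Y.
  rewrite -[LHS]XAX -mulmxA -hAX hadjM [hadj A]hA_AY.
  by rewrite (mulmxA (hadj X)) -hadjM hAX !mulmxA XAX.
rewrite -[RHS]YAY -hYA hadjM [hadj A]hA_XA.
by rewrite -(mulmxA _ (hadj A)) -hadjM hYA -!mulmxA (mulmxA Y) YAY.
Qed.

Lemma MP_inverse_hermitian A X : hadj A = A -> is_MP_inverse A X -> hadj X = X.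
Proof.
move=> hA AX; apply: (MP_inverse_unique (A := A)) => //.
by rewrite -{1}hA; apply: MP_inverse_hadj.
Qed.

(* With S = T T^*, the matrix M = (1 - S S^+) T satisfies M M^* = (1 - S S^+) S (1 - S S^+)^* = 0. *)
Lemma MP_inverse_gram_range m (T : 'M[C]_(n, m)) X :
  is_MP_inverse (T *m hadj T) X -> T *m hadj T *m X *m T = T.
Proof.
case=> SXS _ _ _; set E := T *m hadj T *m X.
have ES : (1%:M - E) *m (T *m hadj T) = 0 by rewrite mulmxBl mul1mx SXS subrr.
suff /eqP : (1%:M - E) *m T = 0 by rewrite mulmxBl mul1mx subr_eq0 => /eqP.
by apply: mul_hadj_eq0; rewrite hadjM !mulmxA -(mulmxA _ T) ES mul0mx.
Qed.

End MoorePenrose.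

Section IdempotentTrace.
Variable F : fieldType.

Lemma mxtrace_pid n r : (r <= n)%N -> \tr (pid_mx r : 'M[F]_n) = r%:R.
Proof.
move=> le_rn.
rewrite -[r in RHS]card_ord -sumr_const (big_ord_widen n (fun=> 1) le_rn).
by rewrite big_mkcond; apply: eq_bigr => i _; rewrite mxE eqxx; case: (i < r)%N.
Qed.

(* Writing E = L pid_r U with L, U invertible, idempotence forces pid_r (U L) pid_r = pid_r. *)
Lemma mxtrace_idem n (E : 'M[F]_n) : E *m E = E -> \tr E = (\rank E)%:R.
Proof.
move=> EE; have := mulmx_ebase E.
set L := col_ebase E; set U := row_ebase E; set D := pid_mx _ => E_LDU.
have DD : D *m D = D by apply: pid_mx_id; apply: rank_leq_row.
have trD : \tr D = (\rank E)%:R by apply: mxtrace_pid; apply: rank_leq_row.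
have DULD : D *m (U *m L) *m D = D.
  have : L *m (D *m (U *m L) *m D) *m U = L *m D *m U.
    by rewrite E_LDU -[RHS]EE -E_LDU !mulmxA.
  move/(congr1 (fun M => invmx L *m (M *m invmx U))).
  by rewrite !mulmxK ?row_ebase_unit // -!mulmxA !mulKmx ?col_ebase_unit.
rewrite -trD -[in RHS]DULD -E_LDU [LHS]mxtrace_mulC [RHS]mxtrace_mulC.
by rewrite (mulmxA D D) DD [RHS]mxtrace_mulC mulmxA.
Qed.

End IdempotentTrace.

Section Frobenius.
Variables (C : numClosedFieldType) (N : nat).

Lemma normC_sub_conj (a b : C) :
  `|a - b^*| ^+ 2 = `|a| ^+ 2 + `|b| ^+ 2 - (a * b + (a * b)^*).
Proof. by rewrite !normCK rmorphB rmorphM /= conjCK; ring. Qed.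

Lemma frobenius_sub_hadj (G : 'M[C]_N) :
  \sum_i \sum_j `|G i j - hadj G i j| ^+ 2 =
  (\sum_i \sum_j `|G i j| ^+ 2) *+ 2 - (\tr (G *m G) + (\tr (G *m G))^*).
Proof.
have trGG : \tr (G *m G) = \sum_i \sum_j G i j * G j i.
  by apply: eq_bigr => i _; rewrite mxE.
under eq_bigr => i _ do under eq_bigr => j _ do rewrite hadjE normC_sub_conj.
under eq_bigr => i _ do rewrite sumrB big_split /=.
rewrite sumrB big_split /= [X in _ + X - _]exchange_big /= -mulr2n.
congr (_ - _); rewrite trGG rmorph_sum -big_split; apply: eq_bigr => i _.
by rewrite rmorph_sum -big_split.
Qed.

Lemma idem_frobenius (G : 'M[C]_N) : G *m G = G ->
  (\rank G)%:R <= \sum_i \sum_j `|G i j| ^+ 2 /\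
  (\sum_i \sum_j `|G i j| ^+ 2 = (\rank G)%:R <-> hadj G = G).
Proof.
move=> GG; set F := \sum_i \sum_j _.
have skew : \sum_i \sum_j `|G i j - hadj G i j| ^+ 2 = (F - (\rank G)%:R) *+ 2.
  by rewrite frobenius_sub_hadj GG mxtrace_idem // conjC_nat mulrnBl.
have skew_ge0 i j : 0 <= `|G i j - hadj G i j| ^+ 2 by rewrite exprn_ge0.
split.
  rewrite -subr_ge0 -(pmulrn_lge0 _ (isT : (0 < 2)%N)) -skew.
  by do 2!apply: sumr_ge0 => ? _.
split=> [Fr | hG].
  have sum0 : \sum_i \sum_j `|G i j - hadj G i j| ^+ 2 = 0.
    by rewrite skew Fr subrr mul0rn.
  apply/matrixP => i j.
  have row_ge0 k : 0 <= \sum_l `|G k l - hadj G k l| ^+ 2 by apply: sumr_ge0.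
  have row0 := psumr_eq0P (fun k _ => row_ge0 k) sum0 (i := i) isT.
  have /eqP := psumr_eq0P (fun l _ => skew_ge0 i l) row0 (i := j) isT.
  by rewrite sqrf_eq0 normr_eq0 subr_eq0 => /eqP ->.
have /eqP : (F - (\rank G)%:R) *+ 2 = 0.
  by rewrite -skew big1 // => i _; rewrite big1 // => j _; rewrite hG subrr normr0 expr0n.
by rewrite mulrn_eq0 subr_eq0 => /eqP.
Qed.

End Frobenius.

Section Orthogonality.
Variables (C : numClosedFieldType) (n : nat).
Implicit Types U V W : 'M[C]_n.

Lemma rank_perp U : \rank (perp U) = (n - \rank U)%N.
Proof. by rewrite mxrank_ker rank_hadj. Qed.

Lemma hadj_mul_perp m p U (X : 'M[C]_(n, m)) (Y : 'M[C]_(n, p)) :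
  (X^T <= U)%MS -> (Y^T <= perp U)%MS -> hadj X *m Y = 0.
Proof.
case/submxP => D XU /sub_kermxP YU; apply: trmx_inj; rewrite trmx_mul trmx0.
have -> : (hadj X)^T = hadj (X^T) by apply/matrixP => i j; rewrite !mxE.
by rewrite XU hadjM mulmxA YU mul0mx.
Qed.

Lemma hadj_perp_mul m p U (X : 'M[C]_(n, m)) (Y : 'M[C]_(n, p)) :
  (X^T <= perp U)%MS -> (Y^T <= U)%MS -> hadj X *m Y = 0.
Proof.
by move=> XU YU; rewrite -[LHS]hadjK hadjM hadjK (hadj_mul_perp YU XU) hadj0.
Qed.

(* x is orthogonal both to W and to V^perp, which together span C^n. *)
Lemma perp_cap_eq0 W V : row_full (W + perp V) -> (V :&: perp W)%MS = 0.
Proof.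
move=> full; set x := (V :&: perp W)%MS.
have Wx : W *m hadj x = 0.
  have /sub_kermxP xW : (x <= perp W)%MS by apply: capmxSr.
  by rewrite -[W]hadjK -hadjM xW hadj0.
have /submxP[D xDV] : (x <= V)%MS by apply: capmxSl.
have perpVx : perp V *m hadj x = 0 by rewrite xDV hadjM mulmxA mulmx_ker mul0mx.
have /submxP[E EWV] : (1%:M <= col_mx W (perp V))%MS by rewrite -addsmxE sub1mx.
rewrite -[x]hadjK -[hadj x]mul1mx EWV -mulmxA mul_col_mx Wx perpVx.
by rewrite col_mx0 mulmx0 hadj0.
Qed.

End Orthogonality.

Section ObliqueProjection.
Context {C : numClosedFieldType} {n : nat} {W V : 'M[C]_n}.
Hypothesis dWV : direct_compl W V.

Let capWV : (W :&: perp V)%MS = 0.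
Proof. by case: dWV => /mxdirect_addsP. Qed.

Lemma oproj_fix p (Y : 'M[C]_(n, p)) : (Y^T <= W)%MS -> oproj W V *m Y = Y.
Proof. by move=> YW; rewrite -[Y]trmxK -trmx_mul proj_mx_id. Qed.

Lemma oproj_sub : ((oproj W V)^T <= W)%MS.
Proof. by rewrite trmxK -[proj_mx _ _]mul1mx proj_mx_sub. Qed.

Lemma oproj_compl_sub : ((1%:M - oproj W V)^T <= perp V)%MS.
Proof.
rewrite linearB /= trmx1 trmxK -[proj_mx _ _]mul1mx proj_mx_compl_sub //.
by case: dWV => _; rewrite sub1mx.
Qed.

Lemma mxtrace_oproj : \tr (oproj W V) = (\rank W)%:R.
Proof.
rewrite mxtrace_tr mxtrace_idem ?proj_mx_proj //.
congr (_%:R); apply/eqP; rewrite eqn_leq !mxrankS //.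
  by rewrite -{1}(proj_mx_id capWV (submx_refl W)) submxMl.
by rewrite -[proj_mx _ _]trmxK; apply: oproj_sub.
Qed.

Lemma direct_compl_sym : direct_compl V W.
Proof.
have [/mxdirect_addsP dx /eqP full] := dWV; have rWV := mxrank_sum_cap W (perp V).
have capVW := perp_cap_eq0 (introT eqP full).
rewrite capWV full mxrank0 rank_perp in rWV.
have := rank_leq_col V; have := rank_leq_col W; split; first exact/mxdirect_addsP.
apply/eqP; have := mxrank_sum_cap V (perp W); rewrite capVW mxrank0 rank_perp.
lia.
Qed.

End ObliqueProjection.

Lemma hadj_oproj (C : numClosedFieldType) n (W V : 'M[C]_n) :
  direct_compl W V -> hadj (oproj W V) = oproj V W.
Proof.
move=> dWV; have dVW := direct_compl_sym dWV; set P := oproj W V; set Q := oproj V W.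
have PQ' : hadj P *m (1%:M - Q) = 0.
  exact: hadj_mul_perp oproj_sub (oproj_compl_sub dVW).
have P'Q : hadj (1%:M - P) *m Q = 0.
  exact: hadj_perp_mul (oproj_compl_sub dWV) oproj_sub.
move: PQ' P'Q; rewrite hadjB hadj1 mulmxBr mulmxBl mulmx1 mul1mx.
by move=> /subr0_eq <- /subr0_eq.
Qed.

Section Synthesis.
Variables (C : numClosedFieldType) (n N : nat).
Implicit Types (w v : 'I_N -> 'cV[C]_n) (U : 'M[C]_n).

Definition synthesis w : 'M[C]_(n, N) := (fam_mx w)^T.

Lemma col_synthesis w j : col j (synthesis w) = w j.
Proof. by apply/colP => k; rewrite !mxE. Qed.

Lemma synthesis_eqP w v (M : 'M[C]_n) :
  (forall j, v j = M *m w j) <-> synthesis v = M *m synthesis w.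
Proof.
have colM j : col j (M *m synthesis w) = M *m w j.
  by rewrite colE -mulmxA -colE col_synthesis.
split=> [vMw | vMw j]; last by rewrite -col_synthesis vMw colM.
apply/matrixP => k j; have := vMw j; rewrite -col_synthesis -colM.
by move/colP/(_ k); rewrite !mxE.
Qed.

Lemma cdot_synthesis w v i j :
  cdot (w i) (v j) = (hadj (synthesis v) *m synthesis w) j i.
Proof. by rewrite /cdot !mxE; apply: eq_bigr => k _; rewrite !mxE. Qed.

Lemma frame_op_synthesis w : frame_op w = synthesis w *m hadj (synthesis w).
Proof.
apply/matrixP => k l; rewrite summxE mxE; apply: eq_bigr => i _.
by rewrite !mxE big_ord1 !mxE.
Qed.

Lemma frame_for_sub w U : frame_for w U -> ((synthesis w)^T <= U)%MS.
Proof. by rewrite trmxK => /andP[]. Qed.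

Lemma synthesis_mul w (c : 'cV[C]_N) : synthesis w *m c = \sum_i c i 0 *: w i.
Proof.
apply/colP => k; rewrite !mxE summxE; apply: eq_bigr => i _.
by rewrite !mxE mulrC.
Qed.

Lemma hadj_synthesis_mul v (f : 'cV[C]_n) :
  hadj (synthesis v) *m f = \col_i cdot f (v i).
Proof. by apply/colP => i; rewrite /cdot !mxE; apply: eq_bigr => k _; rewrite !mxE. Qed.

Lemma oblique_dual_oproj (W V : 'M[C]_n) w v :
  oblique_dual W V w v -> oproj W V = synthesis w *m hadj (synthesis v).
Proof.
case=> _ dual; apply/trmx_inj/eqP/mulmxP => u; apply: trmx_inj.
rewrite !trmx_mul !trmxK dual -mulmxA hadj_synthesis_mul synthesis_mul.
by apply: eq_bigr => i _; rewrite mxE.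
Qed.

End Synthesis.

Lemma gram_hermitianP (C : numClosedFieldType) n N (T B : 'M[C]_(n, N)) (P X : 'M[C]_n) :
  P = T *m hadj B -> P *m T = T -> hadj P *m B = B -> is_MP_inverse (T *m hadj T) X ->
  hadj (hadj B *m T) = hadj B *m T <-> B = hadj P *m X *m T.
Proof.
move=> P_TB PT PB MP.
have hX : hadj X = X by apply: MP_inverse_hermitian MP; rewrite hadjM hadjK.
have BP : hadj B *m P = hadj B by apply: (can_inj (@hadjK _ _ _)); rewrite hadjM hadjK PB.
have TXS : hadj T *m X *m (T *m hadj T) = hadj T.
  by apply: (can_inj (@hadjK _ _ _)); rewrite !hadjM hadjK hX mulmxA MP_inverse_gram_range.
split=> [hG | ->]; last first.
  have -> : hadj (hadj P *m X *m T) *m T = hadj T *m X *m T.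
    by rewrite !hadjM hadjK hX -!mulmxA PT.
  by rewrite !hadjM hadjK hX mulmxA.
have B_TBB : hadj B = hadj T *m B *m hadj B.
  by rewrite -{1}BP P_TB mulmxA -hG hadjM hadjK.
have B_TXP : hadj B = hadj T *m X *m P.
  by rewrite P_TB {2}B_TBB !mulmxA -(mulmxA (hadj T *m X) T) TXS -B_TBB.
by rewrite -[LHS]hadjK B_TXP !hadjM hadjK hX mulmxA.
Qed.

Theorem proposition3p3 (C : numClosedFieldType) (n N : nat)
  (W V : 'M[C]_n) (w v : 'I_N -> 'cV[C]_n) (Sdag : 'M[C]_n) :
  direct_compl W V ->
  frame_for w W ->
  oblique_dual W V w v ->
  is_MP_inverse (frame_op w) Sdag ->
  (\rank W)%:R <= \sum_(i < N) \sum_(j < N) `|cdot (w i) (v j)| ^+ 2 /\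
  (\sum_(i < N) \sum_(j < N) `|cdot (w i) (v j)| ^+ 2 = (\rank W)%:R <->
   forall j : 'I_N, v j = oproj V W *m Sdag *m w j).
Proof.
move=> dWV fw dual MP; have [fv _] := dual.
rewrite frame_op_synthesis in MP; rewrite -hadj_oproj // synthesis_eqP.
set T := synthesis w; set B := synthesis v; set G := hadj B *m T.
have P_TB : oproj W V = T *m hadj B by apply: oblique_dual_oproj.
have PT : oproj W V *m T = T := oproj_fix dWV (frame_for_sub fw).
have PB : hadj (oproj W V) *m B = B.
  by rewrite hadj_oproj //; exact: (oproj_fix (direct_compl_sym dWV) (frame_for_sub fv)).
have GG : G *m G = G by rewrite /G -!mulmxA (mulmxA T) -P_TB PT.
have rankG : (\rank G)%:R = (\rank W)%:R :> C.
  by rewrite -mxtrace_idem // mxtrace_mulC -P_TB mxtrace_oproj.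
have -> : \sum_i \sum_j `|cdot (w i) (v j)| ^+ 2 = \sum_i \sum_j `|G i j| ^+ 2.
  by rewrite exchange_big; do 2!apply: eq_bigr => ? _; rewrite cdot_synthesis.
rewrite -rankG -(gram_hermitianP P_TB PT PB MP).
exact: idem_frobenius.
Qed.
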